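(* For any group $H$, the set $\mathcal I_H=\{G\in\mathcal G:\ \overline G\cong H\}$ is either meager or comeager in $\mathcal G$.
   Context: Let $\mathbb N=\{1,2,3,\dots\}$. Equip $\mathbb N^{\mathbb N\times\mathbb N}$ with the product topology of the discrete topology on $\mathbb N$. Let $\mathcal G$ be the subspace consisting of those $A\in\mathbb N^{\mathbb N\times\mathbb N}$ that are the multiplication table of a group on the underlying set $\mathbb N$ whose identity element is $1$. For $G\in\mathcal G$, $\overline G$ denotes the group on $\mathbb N$ with multiplication table $G$. *)

(* Convention: the underlying set N = {1,2,3,...} is represented by Rocq's
   [nat] via the bijection k |-> k+1, so the identity element 1 of the paper
   is represented by 0. *)

Definition Table := nat -> nat -> nat.

Definition is_group_table (G : Table) : Prop :=
  (forall x y z, G (G x y) z = G x (G y z)) /\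
  (forall x, G 0 x = x /\ G x 0 = x) /\
  (forall x, exists y, G x y = 0 /\ G y x = 0).

Definition agree (n : nat) (A B : Table) : Prop :=
  forall i j, i < n -> j < n -> A i j = B i j.

(* Open sets of the subspace [is_group_table] of N^(N x N) (product of
   discrete topologies): subsets V of the space such that each point of V has
   a basic cylinder neighbourhood whose trace on the space lies in V. *)
Definition rel_open (V : Table -> Prop) : Prop :=
  (forall A, V A -> is_group_table A) /\
  (forall A, V A -> exists n, forall B, is_group_table B -> agree n A B -> V B).

Definition rel_closure (X : Table -> Prop) (A : Table) : Prop :=
  is_group_table A /\
  (forall n, exists B, is_group_table B /\ agree n A B /\ X B).

Definition nowhere_dense (X : Table -> Prop) : Prop :=
  forall V, rel_open V -> (forall A, V A -> rel_closure X A) ->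
    forall A, ~ V A.

Definition meager (X : Table -> Prop) : Prop :=
  exists Ns : nat -> Table -> Prop,
    (forall k, nowhere_dense (Ns k)) /\
    (forall A, is_group_table A -> X A -> exists k, Ns k A).

Definition comeager (X : Table -> Prop) : Prop :=
  meager (fun A => is_group_table A /\ ~ X A).

Definition iso_class {H : Type} (mul : H -> H -> H) (G : Table) : Prop :=
  is_group_table G /\
  exists (f : nat -> H) (g : H -> nat),
    (forall x, g (f x) = x) /\ (forall h, f (g h) = h) /\
    (forall x y, f (G x y) = mul (f x) (f y)).

(* Fix a table A0 in I_H and let [copy A0 q] be the tables isomorphic to A0 by
   an isomorphism labelling the tuple q by 0, ..., |q|-1, so that I_H = copy A0 [].
   If I_H is not meager, then, as I_H is the countable union over p of the tables
   whose isomorphism sends q to p, one of these is somewhere dense, and relabelling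
   shows that every copy A0 q is dense around each of its points.  Realising each
   factor of D x A0 inside a relabelled product then shows that I_H is dense.  A
   table outside the countably many nowhere dense sets where this local density
   fails, or cannot be extended to a longer tuple containing a prescribed element,
   carries a back-and-forth chain of tuples whose limit is an isomorphism with A0;
   hence I_H is comeager. *)

From Stdlib Require Import Arith Lia List Classical ClassicalEpsilon Cantor.
Import ListNotations.

Lemma agree_refl n A : agree n A A.
Proof. now intros i j _ _. Qed.

Lemma agree_trans n A B C : agree n A B -> agree n B C -> agree n A C.
Proof. intros HAB HBC i j Hi Hj. rewrite HAB by assumption. auto. Qed.

Lemma bounded_on (f : nat -> nat) n : exists k, forall x, x < n -> f x < k.
Proof.
  induction n as [|n [k Hk]]; [exists 0; lia|].
  exists (S (max k (f n))). intros x Hx.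
  destruct (Nat.eq_dec x n) as [->|Hne]; [lia|].
  specialize (Hk x ltac:(lia)). lia.
Qed.

Lemma table_bounded_on (D : Table) n : exists k, forall x y, x < n -> y < n -> D x y < k.
Proof.
  induction n as [|n [k Hk]]; [exists 0; lia|].
  destruct (bounded_on (D n) (S n)) as [k1 Hk1].
  destruct (bounded_on (fun x => D x n) (S n)) as [k2 Hk2].
  exists (k + k1 + k2). intros x y Hx Hy.
  destruct (Nat.eq_dec x n) as [->|]; [specialize (Hk1 y Hy); lia|].
  destruct (Nat.eq_dec y n) as [->|]; [specialize (Hk2 x Hx); cbv beta in Hk2; lia|].
  specialize (Hk x y ltac:(lia) ltac:(lia)). lia.
Qed.

Definition table_iso (A C : Table) (f g : nat -> nat) : Prop :=
  (forall x, g (f x) = x) /\ (forall y, f (g y) = y) /\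
  (forall x y, f (A x y) = C (f x) (f y)).

Definition relabel (f g : nat -> nat) (A : Table) : Table := fun x y => f (A (g x) (g y)).

Lemma table_iso_sym A C f g : table_iso A C f g -> table_iso C A g f.
Proof.
  intros (gf & fg & hom). repeat split; auto. intros x y.
  rewrite <- (gf (A (g x) (g y))), hom, !fg. reflexivity.
Qed.

Lemma table_iso_trans A B C f g f' g' :
  table_iso A B f g -> table_iso B C f' g' ->
  table_iso A C (fun x => f' (f x)) (fun z => g (g' z)).
Proof.
  intros (gf & fg & hom) (gf' & fg' & hom').
  repeat split; intros; cbv beta; [rewrite gf', gf | rewrite fg, fg' | rewrite hom, hom'];
    reflexivity.
Qed.

Lemma table_iso_apply A C f g x y : table_iso A C f g -> C x y = f (A (g x) (g y)).
Proof. intros (_ & fg & hom). rewrite hom, !fg. reflexivity. Qed.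

Lemma relabel_iso A f g :
  (forall x, g (f x) = x) -> (forall y, f (g y) = y) -> table_iso A (relabel f g A) f g.
Proof. intros gf fg. repeat split; auto. intros x y. unfold relabel. rewrite !gf. reflexivity. Qed.

Lemma group_idempotent C e : is_group_table C -> C e e = e -> e = 0.
Proof.
  intros (assoc & unit & inv) He. destruct (inv e) as (y & _ & Hye).
  pose proof (assoc y e e) as E. rewrite He, Hye, (proj1 (unit e)) in E. exact E.
Qed.

Lemma table_iso_zero A C f g :
  is_group_table A -> is_group_table C -> table_iso A C f g -> f 0 = 0.
Proof.
  intros HA HC (_ & _ & hom). apply (group_idempotent C); [exact HC|].
  rewrite <- hom, (proj1 (proj1 (proj2 HA) 0)). reflexivity.
Qed.

Lemma table_iso_group A C f g :
  is_group_table A -> table_iso A C f g -> f 0 = 0 -> is_group_table C.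
Proof.
  intros (assoc & unit & inv) Hiso f0.
  pose proof (fun x y => table_iso_apply A C f g x y Hiso) as HC.
  destruct Hiso as (gf & fg & _).
  assert (g0 : g 0 = 0) by (rewrite <- f0 at 1; apply gf).
  split; [|split].
  - intros x y z. rewrite !HC, !gf, assoc. reflexivity.
  - intros x. rewrite !HC, g0, (proj1 (unit _)), (proj2 (unit _)), fg. split; reflexivity.
  - intros x. destruct (inv (g x)) as (y & Hxy & Hyx). exists (f y).
    rewrite !HC, !gf, Hxy, Hyx, f0. split; reflexivity.
Qed.

Definition dense_near (X : Table -> Prop) (m : nat) (A : Table) : Prop :=
  forall B, is_group_table B -> agree m A B -> rel_closure X B.

Definition interior_closure (X : Table -> Prop) (A : Table) : Prop :=
  exists m, dense_near X m A.

Lemma dense_near_agree X m A C : dense_near X m A -> agree m A C -> dense_near X m C.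
Proof. intros HA HAC B HB HCB. apply HA; [exact HB|]. eapply agree_trans; eauto. Qed.

Lemma rel_closure_mono (X Y : Table -> Prop) A :
  (forall C, X C -> Y C) -> rel_closure X A -> rel_closure Y A.
Proof.
  intros HXY [HA Hcl]. split; [exact HA|]. intros n.
  destruct (Hcl n) as (B & HB & HAB & HXB). exists B. auto.
Qed.

Lemma nowhere_dense_intro X :
  (forall A k, is_group_table A -> dense_near X k A ->
     exists C m, is_group_table C /\ agree k A C /\
       forall B, is_group_table B -> agree m C B -> ~ X B) ->
  nowhere_dense X.
Proof.
  intros Hsep V [HVg HVo] Hcl A HA. destruct (HVo A HA) as [k Hk].
  destruct (Hsep A k (HVg A HA)) as (C & m & HC & HAC & Hout).
  { intros B HB HAB. apply Hcl, Hk; assumption. }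
  destruct (Hcl C (Hk C HC HAC)) as [_ HclC].
  destruct (HclC m) as (B & HB & HCB & HXB). exact (Hout B HB HCB HXB).
Qed.

Lemma not_nowhere_dense X :
  ~ nowhere_dense X -> exists A, is_group_table A /\ interior_closure X A.
Proof.
  intros Hnd. apply NNPP. intros Hno. apply Hnd. intros V [HVg HVo] Hcl A HA.
  destruct (HVo A HA) as [k Hk]. apply Hno. exists A. split; [exact (HVg A HA)|].
  exists k. intros B HB HAB. apply Hcl, Hk; assumption.
Qed.

Lemma nowhere_dense_mono (X Y : Table -> Prop) :
  nowhere_dense Y -> (forall A, X A -> Y A) -> nowhere_dense X.
Proof.
  intros HY HXY V HV Hcl. apply (HY V HV). intros A HA.
  exact (rel_closure_mono X Y A HXY (Hcl A HA)).
Qed.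

Lemma nowhere_dense_empty : nowhere_dense (fun _ => False).
Proof.
  apply nowhere_dense_intro. intros A k HA _. exists A, 0.
  split; [exact HA|]. split; [apply agree_refl|]. auto.
Qed.

Lemma meager_mono (X Y : Table -> Prop) :
  (forall A, is_group_table A -> X A -> Y A) -> meager Y -> meager X.
Proof. intros HXY (Ns & Hnd & Hcov). exists Ns. split; auto. Qed.

Lemma meager_of_cover {I : Type} (code : I -> nat) (Y : I -> Table -> Prop) (X : Table -> Prop) :
  (forall i j, code i = code j -> i = j) -> (forall i, nowhere_dense (Y i)) ->
  (forall A, is_group_table A -> X A -> exists i, Y i A) -> meager X.
Proof.
  intros Hcode Hnd Hcov. exists (fun k A => exists i, code i = k /\ Y i A). split.
  - intros k V HV Hcl A HA.
    destruct (Hcl A HA) as [_ HclA]. destruct (HclA 0) as (_ & _ & _ & i & Hi & _).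
    refine (nowhere_dense_mono _ (Y i) (Hnd i) _ V HV Hcl A HA).
    intros B (j & Hj & HB). rewrite (Hcode i j) by congruence. exact HB.
  - intros A HA HXA. destruct (Hcov A HA HXA) as [i Hi]. exists (code i), i. auto.
Qed.

Fixpoint list_code (l : list nat) : nat :=
  match l with
  | [] => 0
  | x :: l => S (to_nat (x, list_code l))
  end.

Lemma list_code_inj l l' : list_code l = list_code l' -> l = l'.
Proof.
  revert l'. induction l as [|x l IH]; intros [|x' l'] E; try discriminate; [reflexivity|].
  assert (E' : (x, list_code l) = (x', list_code l')).
  { apply to_nat_inj. cbn [list_code] in E. congruence. }
  injection E' as -> E'. f_equal. auto.
Qed.

Lemma agree_iso B B' C C' f g k L :
  table_iso B B' f g -> table_iso C C' f g -> (forall x, x < k -> g x < L) ->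
  agree L B C -> agree k B' C'.
Proof.
  intros HB HC Hg HBC x y Hx Hy.
  rewrite (table_iso_apply _ _ _ _ x y HB), (table_iso_apply _ _ _ _ x y HC), HBC; auto.
Qed.

Lemma rel_closure_iso (X Y : Table -> Prop) B B' f g :
  rel_closure X B -> table_iso B B' f g -> f 0 = 0 ->
  (forall C C', X C -> table_iso C C' f g -> Y C') -> rel_closure Y B'.
Proof.
  intros [HB Hcl] Hiso f0 HXY. split; [exact (table_iso_group _ _ _ _ HB Hiso f0)|].
  intros n. destruct (bounded_on g n) as [k Hk].
  destruct (Hcl k) as (C & HC & HBC & HXC).
  pose proof (relabel_iso C f g (proj1 Hiso) (proj1 (proj2 Hiso))) as HC'.
  exists (relabel f g C). split; [|split].
  - exact (table_iso_group _ _ _ _ HC HC' f0).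
  - exact (agree_iso _ _ _ _ _ _ _ _ Hiso HC' Hk HBC).
  - exact (HXY _ _ HXC HC').
Qed.

Lemma interior_closure_iso (X Y : Table -> Prop) C C' f g :
  is_group_table C -> is_group_table C' -> table_iso C C' f g ->
  (forall D D', X D -> table_iso D D' g f -> Y D') ->
  interior_closure X C' -> interior_closure Y C.
Proof.
  intros HC HC' Hiso HXY [k Hk].
  pose proof (table_iso_zero _ _ _ _ HC HC' Hiso) as f0.
  pose proof (table_iso_zero _ _ _ _ HC' HC (table_iso_sym _ _ _ _ Hiso)) as g0.
  destruct (bounded_on g k) as [L HL]. exists L. intros B HB HCB.
  pose proof (relabel_iso B f g (proj1 Hiso) (proj1 (proj2 Hiso))) as HB'.
  apply (rel_closure_iso X Y (relabel f g B) B g f); [|exact (table_iso_sym _ _ _ _ HB') | exact g0 | exact HXY].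
  apply Hk; [exact (table_iso_group _ _ _ _ HB HB' f0)|].
  exact (agree_iso _ _ _ _ _ _ _ _ Hiso HB' HL HCB).
Qed.

Definition prod_table (D E : Table) : Table := fun x y =>
  to_nat (D (fst (of_nat x)) (fst (of_nat y)), E (snd (of_nat x)) (snd (of_nat y))).

Lemma prod_table_pair D E a b c d :
  prod_table D E (to_nat (a, b)) (to_nat (c, d)) = to_nat (D a c, E b d).
Proof. unfold prod_table. rewrite !cancel_of_to. reflexivity. Qed.

Lemma prod_table_group D E :
  is_group_table D -> is_group_table E -> is_group_table (prod_table D E).
Proof.
  intros (Da & Du & Dv) (Ea & Eu & Ev). unfold prod_table. split; [|split].
  - intros x y z. rewrite !cancel_of_to. cbn [fst snd]. rewrite Da, Ea. reflexivity.
  - intros x. change (of_nat 0) with (0, 0). cbn [fst snd].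
    rewrite (proj1 (Du _)), (proj2 (Du _)), (proj1 (Eu _)), (proj2 (Eu _)).
    rewrite <- surjective_pairing, cancel_to_of. split; reflexivity.
  - intros x. destruct (Dv (fst (of_nat x))) as (a & Ha1 & Ha2).
    destruct (Ev (snd (of_nat x))) as (b & Hb1 & Hb2). exists (to_nat (a, b)).
    rewrite cancel_of_to. cbn [fst snd]. rewrite Ha1, Ha2, Hb1, Hb2. split; reflexivity.
Qed.

Definition swap (a b x : nat) : nat := if x =? a then b else if x =? b then a else x.

Lemma swap_involutive a b x : swap a b (swap a b x) = x.
Proof.
  unfold swap.
  destruct (Nat.eqb_spec x a), (Nat.eqb_spec x b); subst;
    repeat match goal with |- context [?u =? ?v] => destruct (Nat.eqb_spec u v); subst end;
    congruence.
Qed.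

Lemma finite_injection_extends (a : nat -> nat) K :
  (forall i j, i < K -> j < K -> a i = a j -> i = j) ->
  exists f g, (forall x, g (f x) = x) /\ (forall y, f (g y) = y) /\
    (forall i, i < K -> f i = a i).
Proof.
  induction K as [|K IH]; intros Hinj.
  { exists (fun x => x), (fun x => x). repeat split. intros; lia. }
  destruct IH as (f & g & gf & fg & Hfa); [intros i j Hi Hj; apply Hinj; lia|].
  exists (fun x => swap (f K) (a K) (f x)), (fun y => g (swap (f K) (a K) y)).
  split; [|split]; intros; cbv beta.
  - rewrite swap_involutive, gf. reflexivity.
  - rewrite fg, swap_involutive. reflexivity.
  - unfold swap. destruct (Nat.eq_dec i K) as [->|Hne]; [rewrite Nat.eqb_refl; reflexivity|].
    rewrite (Hfa i) by lia.
    destruct (Nat.eqb_spec (a i) (f K)) as [E|]; [|destruct (Nat.eqb_spec (a i) (a K))].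
    + rewrite <- (Hfa i) in E by lia. apply (f_equal g) in E. rewrite !gf in E. contradiction.
    + exfalso. apply Hne, Hinj; lia || assumption.
    + reflexivity.
Qed.

Lemma partial_hom_extends (P D : Table) (a : nat -> nat) n :
  (forall x y, a x = a y -> x = y) -> a 0 = 0 ->
  (forall x y, x < n -> y < n -> P (a x) (a y) = a (D x y)) ->
  exists D' f g, table_iso P D' f g /\ f 0 = 0 /\ agree n D D'.
Proof.
  intros Hinj a0 Hhom. destruct (table_bounded_on D n) as [k Hk].
  destruct (finite_injection_extends a (S (n + k))) as (e & ei & eie & eei & Hea);
    [intros i j _ _; apply Hinj|].
  exists (relabel ei e P), ei, e. split; [apply relabel_iso; assumption|]. split.
  - assert (e0 : e 0 = 0) by (rewrite Hea by lia; exact a0).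
    rewrite <- e0 at 1. apply eie.
  - intros x y Hx Hy. specialize (Hk x y Hx Hy). unfold relabel.
    rewrite (Hea x), (Hea y), Hhom, <- (Hea (D x y)), eie by lia. reflexivity.
Qed.

Lemma iso_invariant_dense (X : Table -> Prop) C0 :
  (forall C C' f g, X C -> table_iso C C' f g -> f 0 = 0 -> X C') ->
  is_group_table C0 -> interior_closure X C0 ->
  forall D, is_group_table D -> rel_closure X D.
Proof.
  intros Hinv HC0 [m Hm] D HD. split; [exact HD|]. intros n.
  pose proof (prod_table_group D C0 HD HC0) as HP.
  (* Relabel D x C0 to agree with D on [0,n) (D1) and with C0 on [0,m) (E1):
     E1 lies near C0 and D1 is isomorphic to E1. *)
  destruct (partial_hom_extends (prod_table D C0) D (fun x => to_nat (x, 0)) n)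
    as (D1 & f1 & g1 & Hiso1 & f10 & HDD1).
  { intros x y E. apply to_nat_inj in E. congruence. }
  { reflexivity. }
  { intros x y _ _. cbv beta. rewrite prod_table_pair, (proj1 (proj1 (proj2 HC0) 0)). reflexivity. }
  destruct (partial_hom_extends (prod_table D C0) C0 (fun x => to_nat (0, x)) m)
    as (E1 & f2 & g2 & Hiso2 & f20 & HC0E1).
  { intros x y E. apply to_nat_inj in E. congruence. }
  { reflexivity. }
  { intros x y _ _. cbv beta. rewrite prod_table_pair, (proj1 (proj1 (proj2 HD) 0)). reflexivity. }
  assert (HE1 : is_group_table E1) by exact (table_iso_group _ _ _ _ HP Hiso2 f20).
  assert (g20 : g2 0 = 0) by exact (table_iso_zero _ _ _ _ HE1 HP (table_iso_sym _ _ _ _ Hiso2)).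
  assert (Hiso : table_iso E1 D1 (fun x => f1 (g2 x)) (fun y => f2 (g1 y)))
    by exact (table_iso_trans _ _ _ _ _ _ _ (table_iso_sym _ _ _ _ Hiso2) Hiso1).
  assert (h0 : f1 (g2 0) = 0) by (rewrite g20; exact f10).
  destruct (rel_closure_iso X X E1 D1 _ _ (Hm E1 HE1 HC0E1) Hiso h0) as [_ HclD1].
  { intros C C' HC HCC'. exact (Hinv C C' _ _ HC HCC' h0). }
  destruct (HclD1 n) as (C & HC & HD1C & HXC).
  exists C. split; [exact HC|]. split; [exact (agree_trans _ _ _ _ HDD1 HD1C)|exact HXC].
Qed.

Definition iso_sends (A0 : Table) (q p : list nat) (C : Table) : Prop :=
  is_group_table C /\
  exists f g, table_iso A0 C f g /\ forall j, j < length q -> f (nth j q 0) = nth j p 0.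

Definition copy (A0 : Table) (q : list nat) : Table -> Prop :=
  iso_sends A0 q (seq 0 (length q)).

Lemma nth_map_seq (f : nat -> nat) n j : j < n -> nth j (map f (seq 0 n)) 0 = f j.
Proof.
  intros Hj. rewrite nth_indep with (d' := f 0) by (rewrite length_map, length_seq; exact Hj).
  rewrite map_nth, seq_nth by exact Hj. reflexivity.
Qed.

Lemma iso_sends_iso A0 q p p' C C' f g :
  iso_sends A0 q p C -> table_iso C C' f g -> f 0 = 0 ->
  (forall j, j < length q -> f (nth j p 0) = nth j p' 0) -> iso_sends A0 q p' C'.
Proof.
  intros [HC (phi & phii & Hphi & Hq)] Hiso f0 Hp.
  split; [exact (table_iso_group _ _ _ _ HC Hiso f0)|].
  exists (fun x => f (phi x)), (fun y => phii (g y)).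
  split; [exact (table_iso_trans _ _ _ _ _ _ _ Hphi Hiso)|].
  intros j Hj. cbv beta. rewrite Hq by exact Hj. exact (Hp j Hj).
Qed.

Lemma copy_nil_iso_invariant A0 C C' f g :
  copy A0 [] C -> table_iso C C' f g -> f 0 = 0 -> copy A0 [] C'.
Proof.
  intros HC Hiso f0. apply (iso_sends_iso _ _ _ _ _ _ _ _ HC Hiso f0).
  intros j Hj. simpl in Hj. lia.
Qed.

Lemma copy_app A0 q s C : copy A0 (q ++ s) C -> copy A0 q C.
Proof.
  intros [HC (f & g & Hiso & Hq)]. split; [exact HC|]. exists f, g. split; [exact Hiso|].
  intros j Hj. specialize (Hq j).
  rewrite length_app, app_nth1, !seq_nth in Hq by lia. rewrite seq_nth by exact Hj.
  apply Hq. lia.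
Qed.

Lemma copy_of_iso A0 C f g n :
  is_group_table C -> table_iso A0 C f g -> copy A0 (map g (seq 0 n)) C.
Proof.
  intros HC Hiso. split; [exact HC|]. exists f, g. split; [exact Hiso|].
  intros j Hj. rewrite length_map, length_seq in *.
  rewrite nth_map_seq, seq_nth by exact Hj. apply Hiso.
Qed.

Lemma copy_extend A0 q t C :
  copy A0 q C -> exists r, r <> [] /\ In t (q ++ r) /\ copy A0 (q ++ r) C.
Proof.
  intros [HC (f & g & Hiso & Hq)].
  assert (Eq : q = map g (seq 0 (length q))).
  { apply nth_ext with 0 0; [rewrite length_map, length_seq; reflexivity|].
    intros j Hj. pose proof (Hq j Hj) as E. rewrite seq_nth in E by exact Hj.
    rewrite nth_map_seq by exact Hj. rewrite <- (proj1 Hiso (nth j q 0)), E. reflexivity. }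
  exists (map g (seq (length q) (S (f t)))).
  assert (Eqr : q ++ map g (seq (length q) (S (f t))) = map g (seq 0 (length q + S (f t)))).
  { rewrite (seq_app (length q)), map_app, <- Eq. reflexivity. }
  rewrite Eqr. split; [discriminate|]. split; [|exact (copy_of_iso _ _ _ _ _ HC Hiso)].
  apply in_map_iff. exists (f t). split; [apply Hiso|]. apply in_seq. lia.
Qed.

Lemma copy_of_approximations A0 B (psi : nat -> nat) :
  is_group_table B -> (forall y, exists j, psi j = y) ->
  (forall n, rel_closure (copy A0 (map psi (seq 0 n))) B) -> copy A0 [] B.
Proof.
  intros HB Hsurj Happrox.
  assert (Hwitness : forall n, exists C phi phii, table_iso A0 C phi phii /\ agree n B C /\
                                  forall j, j < n -> phi (psi j) = j).
  { intros n. destruct (Happrox n) as [_ Hcl].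
    destruct (Hcl n) as (C & _ & HBC & _ & phi & phii & Hiso & Hq).
    exists C, phi, phii. split; [exact Hiso|]. split; [exact HBC|]. intros j Hj.
    specialize (Hq j). rewrite length_map, length_seq, nth_map_seq, seq_nth in Hq by exact Hj.
    exact (Hq Hj). }
  assert (Hinj : forall j j', psi j = psi j' -> j = j').
  { intros j j' E. destruct (Hwitness (S (j + j'))) as (C & phi & phii & _ & _ & Hphi).
    pose proof (Hphi j ltac:(lia)) as Ej. pose proof (Hphi j' ltac:(lia)) as Ej'.
    rewrite E in Ej. congruence. }
  assert (Hhom : forall x y, psi (B x y) = A0 (psi x) (psi y)).
  { intros x y. destruct (Hsurj (A0 (psi x) (psi y))) as [z Hz]. rewrite <- Hz. f_equal.
    destruct (Hwitness (S (x + y + z))) as (C & phi & phii & (_ & _ & hom) & HBC & Hphi).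
    rewrite HBC by lia.
    transitivity (C (phi (psi x)) (phi (psi y))); [rewrite !Hphi by lia; reflexivity|].
    rewrite <- hom, <- Hz. apply Hphi. lia. }
  destruct (choice (fun y j => psi j = y) Hsurj) as [psii Hpsii].
  split; [exact HB|]. exists psii, psi. split; [|intros j Hj; simpl in Hj; lia].
  apply table_iso_sym. split; [|split].
  - intros x. apply Hinj. rewrite Hpsii. reflexivity.
  - exact Hpsii.
  - exact Hhom.
Qed.

Lemma copy_locally_dense A0 :
  is_group_table A0 -> ~ meager (copy A0 []) ->
  forall q C, copy A0 q C -> interior_closure (copy A0 q) C.
Proof.
  intros HA0 Hnm q C [HC (phi & phii & Hphi & Hq)].
  (* copy A0 [] is the countable union of the sets iso_sends A0 q p *)
  assert (Hp : exists p, ~ nowhere_dense (iso_sends A0 q p)).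
  { apply NNPP. intros Hall. apply Hnm.
    apply (meager_of_cover list_code (iso_sends A0 q)); [exact list_code_inj| |].
    - intros p. apply NNPP. intros Hp. apply Hall. exists p. exact Hp.
    - intros D _ [HD (f & g & Hf & _)]. exists (map f q). split; [exact HD|].
      exists f, g. split; [exact Hf|]. intros j Hj.
      rewrite <- (map_nth f q 0 j). apply nth_indep. rewrite length_map. exact Hj. }
  destruct Hp as [p Hp].
  destruct (not_nowhere_dense _ Hp) as (A & HA & k & Hk).
  destruct (Hk A HA (agree_refl _ _)) as [_ HclA].
  destruct (HclA k) as (C' & HC' & HAC' & _ & f & g & Hf & Hqp).
  apply (interior_closure_iso (iso_sends A0 q p) _ C C' (fun x => f (phii x)) (fun y => phi (g y)) HC HC').
  - exact (table_iso_trans _ _ _ _ _ _ _ (table_iso_sym _ _ _ _ Hphi) Hf).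
  - intros D D' HD Hiso. apply (iso_sends_iso _ _ _ _ _ _ _ _ HD Hiso).
    + cbv beta. rewrite (table_iso_zero _ _ _ _ HC' HA0 (table_iso_sym _ _ _ _ Hf)).
      exact (table_iso_zero _ _ _ _ HA0 HC Hphi).
    + intros j Hj. cbv beta. rewrite <- (Hqp j Hj), (proj1 Hf). exact (Hq j Hj).
  - exists k. exact (dense_near_agree _ _ _ _ Hk HAC').
Qed.

Section PrefixChain.

Variable P : list nat -> Prop.
Variable F : list nat -> nat -> list nat.

Fixpoint chain (i : nat) : list nat :=
  match i with
  | 0 => []
  | S i => chain i ++ F (chain i) i
  end.

Definition chain_limit (j : nat) : nat := nth j (chain (S j)) 0.

Lemma chain_prefix i i' : i <= i' -> exists s, chain i' = chain i ++ s.
Proof.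
  induction 1 as [|i' _ [s Hs]]; [exists []; rewrite app_nil_r; reflexivity|].
  exists (s ++ F (chain i') i'). simpl. rewrite Hs, app_assoc. reflexivity.
Qed.

Hypothesis P_nil : P [].
Hypothesis F_extends : forall q t, P q -> F q t <> [] /\ In t (q ++ F q t) /\ P (q ++ F q t).

Lemma chain_P i : P (chain i).
Proof. induction i as [|i IH]; [exact P_nil | exact (proj2 (proj2 (F_extends _ i IH)))]. Qed.

Lemma chain_length i : i <= length (chain i).
Proof.
  induction i as [|i IH]; simpl; [lia|]. rewrite length_app.
  pose proof (proj1 (F_extends (chain i) i (chain_P i))) as Hne.
  destruct (F (chain i) i); [congruence | simpl; lia].
Qed.

Lemma chain_eq_limit i : chain i = map chain_limit (seq 0 (length (chain i))).
Proof.
  apply nth_ext with 0 0; [rewrite length_map, length_seq; reflexivity|].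
  intros j Hj. rewrite nth_map_seq by exact Hj. unfold chain_limit.
  destruct (Nat.le_ge_cases i (S j)) as [Hle|Hle].
  - destruct (chain_prefix i (S j) Hle) as [s Hs]. rewrite Hs, app_nth1 by exact Hj. reflexivity.
  - destruct (chain_prefix (S j) i Hle) as [s Hs].
    rewrite Hs, app_nth1 by (pose proof (chain_length (S j)); lia). reflexivity.
Qed.

Lemma chain_limit_surj t : exists j, chain_limit j = t.
Proof.
  destruct (F_extends (chain t) t (chain_P t)) as (_ & Ht & _).
  change (In t (chain (S t))) in Ht. rewrite chain_eq_limit in Ht.
  apply in_map_iff in Ht as (j & Hj & _). exists j. exact Hj.
Qed.

Lemma chain_limit_prefix n : exists s, P (map chain_limit (seq 0 n) ++ s).
Proof.
  exists (map chain_limit (seq (0 + n) (length (chain n) - n))).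
  rewrite <- map_app, <- seq_app.
  replace (n + (length (chain n) - n)) with (length (chain n))
    by (pose proof (chain_length n); lia).
  rewrite <- chain_eq_limit. apply chain_P.
Qed.

End PrefixChain.

Lemma prefix_chain_limit (P : list nat -> Prop) :
  P [] -> (forall q t, P q -> exists r, r <> [] /\ In t (q ++ r) /\ P (q ++ r)) ->
  exists psi : nat -> nat,
    (forall t, exists j, psi j = t) /\ (forall n, exists s, P (map psi (seq 0 n) ++ s)).
Proof.
  intros Hnil Hext.
  assert (Hchoice : forall qt : list nat * nat, exists r,
             P (fst qt) -> r <> [] /\ In (snd qt) (fst qt ++ r) /\ P (fst qt ++ r)).
  { intros [q t]. destruct (classic (P q)) as [Hq|Hq].
    - destruct (Hext q t Hq) as [r Hr]. exists r. intros _. exact Hr.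
    - exists []. intros Hq'. contradiction. }
  destruct (choice _ Hchoice) as [F HF].
  pose (F' := fun q t => F (q, t)).
  assert (HF' : forall q t, P q -> F' q t <> [] /\ In t (q ++ F' q t) /\ P (q ++ F' q t))
    by (intros q t; exact (HF (q, t))).
  exists (chain_limit F'). split.
  - exact (chain_limit_surj P F' Hnil HF').
  - exact (chain_limit_prefix P F' Hnil HF').
Qed.

Section Comeager.

Variable A0 : Table.
Hypothesis local_density : forall q C, copy A0 q C -> interior_closure (copy A0 q) C.
Hypothesis global_density : forall D, is_group_table D -> rel_closure (copy A0 []) D.

Definition extendable (q : list nat) (t : nat) (B : Table) : Prop :=
  exists r, r <> [] /\ In t (q ++ r) /\ interior_closure (copy A0 (q ++ r)) B.

(* The tables where the back-and-forth construction gets stuck: [] codes the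
   failure to start, [t :: q] the failure to extend q so as to cover t. *)
Definition obstruction (l : list nat) (B : Table) : Prop :=
  is_group_table B /\
  match l with
  | [] => ~ interior_closure (copy A0 []) B
  | t :: q => interior_closure (copy A0 q) B /\ ~ extendable q t B
  end.

Lemma obstruction_nowhere_dense l : nowhere_dense (obstruction l).
Proof.
  apply nowhere_dense_intro. intros A k HA Hnear. destruct l as [|t q].
  - destruct (global_density A HA) as [_ Hcl]. destruct (Hcl k) as (C & HC & HAC & HcC).
    destruct (local_density _ _ HcC) as [m Hm].
    exists C, m. split; [exact HC|]. split; [exact HAC|].
    intros B HB HCB [_ Hno]. apply Hno. exists m. exact (dense_near_agree _ _ _ _ Hm HCB).
  - destruct (Hnear A HA (agree_refl _ _)) as [_ Hcl].
    destruct (Hcl k) as (D1 & HD1 & HAD1 & _ & [m1 Hm1] & _).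
    destruct (Hm1 D1 HD1 (agree_refl _ _)) as [_ Hcl1].
    destruct (Hcl1 k) as (C & HC & HD1C & HcC).
    destruct (copy_extend _ _ t _ HcC) as (r & Hr & Ht & Hcr).
    destruct (local_density _ _ Hcr) as [m Hm].
    exists C, m. split; [exact HC|]. split; [exact (agree_trans _ _ _ _ HAD1 HD1C)|].
    intros B HB HCB (_ & _ & Hno). apply Hno. exists r. split; [exact Hr|]. split; [exact Ht|].
    exists m. exact (dense_near_agree _ _ _ _ Hm HCB).
Qed.

Lemma copy_comeager : meager (fun B => is_group_table B /\ ~ copy A0 [] B).
Proof.
  apply (meager_of_cover list_code obstruction); [exact list_code_inj | exact obstruction_nowhere_dense|].
  intros B HB [_ Hnot]. apply NNPP. intros Hno. apply Hnot.
  destruct (prefix_chain_limit (fun q => interior_closure (copy A0 q) B)) as (psi & Hsurj & Hpre).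
  - apply NNPP. intros H0. apply Hno. exists []. split; [exact HB | exact H0].
  - intros q t Hq. apply NNPP. intros Hq'. apply Hno. exists (t :: q).
    split; [exact HB|]. split; [exact Hq | exact Hq'].
  - apply (copy_of_approximations A0 B psi HB Hsurj). intros n.
    destruct (Hpre n) as (s & m & Hm).
    apply (rel_closure_mono (copy A0 (map psi (seq 0 n) ++ s))); [apply copy_app|].
    exact (Hm B HB (agree_refl _ _)).
Qed.

End Comeager.

Lemma iso_class_copy {H : Type} (mul : H -> H -> H) A0 C :
  iso_class mul A0 -> (iso_class mul C <-> copy A0 [] C).
Proof.
  intros (_ & f0 & g0 & gf0 & fg0 & hom0). split.
  - intros (HC & f & g & gf & fg & hom). split; [exact HC|].
    exists (fun x => g (f0 x)), (fun y => g0 (f y)). split; [|intros j Hj; simpl in Hj; lia].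
    split; [|split]; intros; cbv beta.
    + rewrite fg, gf0. reflexivity.
    + rewrite fg0, gf. reflexivity.
    + rewrite hom0, <- (gf (C _ _)), hom, !fg. reflexivity.
  - intros (HC & phi & phii & Hiso & _). split; [exact HC|].
    destruct (table_iso_sym _ _ _ _ Hiso) as (phiphii & phiiphi & homi).
    exists (fun x => f0 (phii x)), (fun h => phi (g0 h)). split; [|split]; intros; cbv beta.
    + rewrite gf0, phiphii. reflexivity.
    + rewrite phiiphi, fg0. reflexivity.
    + rewrite homi, hom0. reflexivity.
Qed.

Theorem theorem5p6 (H : Type) (mul : H -> H -> H) (e : H) (inv : H -> H)
  (mul_assoc : forall a b c, mul (mul a b) c = mul a (mul b c))
  (mul_e_l : forall a, mul e a = a) (mul_e_r : forall a, mul a e = a)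
  (mul_inv_l : forall a, mul (inv a) a = e) (mul_inv_r : forall a, mul a (inv a) = e) :
  meager (iso_class mul) \/ comeager (iso_class mul).
Proof.
  destruct (classic (meager (iso_class mul))) as [Hmeager | Hnot_meager]; [left; exact Hmeager | right].
  destruct (classic (exists A0, iso_class mul A0)) as [[A0 HA0] | Hempty].
  - pose proof (fun C => iso_class_copy mul A0 C HA0) as Hcopy.
    assert (Hlocal : forall q C, copy A0 q C -> interior_closure (copy A0 q) C).
    { apply (copy_locally_dense A0 (proj1 HA0)). intros Hm. apply Hnot_meager.
      exact (meager_mono _ _ (fun A _ HA => proj1 (Hcopy A) HA) Hm). }
    assert (Hdense : forall D, is_group_table D -> rel_closure (copy A0 []) D).
    { apply (iso_invariant_dense _ A0 (copy_nil_iso_invariant A0) (proj1 HA0)).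
      apply Hlocal, Hcopy, HA0. }
    refine (meager_mono _ _ _ (copy_comeager A0 Hlocal Hdense)).
    intros A _ [HA Hnot]. split; [exact HA|]. rewrite <- Hcopy. exact Hnot.
  - exfalso. apply Hnot_meager. exists (fun _ _ => False).
    split; [intros _; exact nowhere_dense_empty|].
    intros A _ HA. exfalso. apply Hempty. exists A. exact HA.
Qed.
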